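(* Let $G$ be a reaction network with one-dimensional stoichiometric subspace. If for a rate-constant vector $\kappa^*$ and a total-constant vector $c^*$, $G$ has exactly $N$ positive steady states $x^{(1)},\dots,x^{(N)}$ in $\mathcal P_{c^*}$ with $x^{(1)}_1<\dots<x^{(N)}_1$, then (a) for any $1\le i\le N-1$, $x^{(i)}$ and $x^{(i+1)}$ are not both stable, and (b) at most $\lceil N/2\rceil$ of these positive steady states are stable.
   Context: A reaction network $G$ has species $X_1,\dots,X_s$ and $m$ reactions $\sum_{i}\alpha_{ij}X_i\to\sum_i\beta_{ij}X_i$, $\alpha_{ij},\beta_{ij}\in\mathbb Z_{\ge0}$, $(\alpha_{1j},\dots,\alpha_{sj})\neq(\beta_{1j},\dots,\beta_{sj})$. $\mathcal N$ has entries $\beta_{ij}-\alpha_{ij}$, $S=\mathrm{im}\,\mathcal N$. For $\kappa\in\mathbb R^m_{>0}$, $f(\kappa;x)=\mathcal N(\kappa_1\prod_i x_i^{\alpha_{i1}},\dots,\kappa_m\prod_i x_i^{\alpha_{im}})^\top$. Since $S$ is one-dimensional, species are labelled so that $\beta_{11}-\alpha_{11}\ne0$, and for $c\in\mathbb R^{s-1}$, $\mathcal P_c=\{x\in\mathbb R^s_{\ge0}:(\beta_{i1}-\alpha_{i1})x_1-(\beta_{11}-\alpha_{11})x_i=c_{i-1},\ i=2,\dots,s\}$. A steady state is $x\ge0$ with $f(\kappa;x)=0$; positive if $x\in\mathbb R^s_{>0}$; nondegenerate if $\mathrm{Jac}_f(x)(S)=S$; stable if nondegenerate and all nonzero eigenvalues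 of $\mathrm{Jac}_f(x)$ have negative real parts. *)

From HB Require Import structures.
From mathcomp Require Import all_boot all_order all_algebra.
From mathcomp Require Import mpoly.
From mathcomp Require Import complex.
From Stdlib Require Import Rdefinitions.
From mathcomp Require Import Rstruct.

Set Implicit Arguments.
Unset Strict Implicit.
Unset Printing Implicit Defensive.

Import Order.TTheory GRing.Theory Num.Theory.
Local Open Scope ring_scope.

Notation Real := Rdefinitions.R.

(* Species are indexed by 'I_s, reactions by 'I_m.  Reaction j is
   sum_i alpha i j X_i -> sum_i beta i j X_i. *)

Definition valid_network (s m : nat) (alpha beta : 'M[nat]_(s, m)) : Prop :=
  forall j : 'I_m, exists i : 'I_s, alpha i j != beta i j.

Definition stoich (s m : nat) (alpha beta : 'M[nat]_(s, m)) : 'M[Real]_(s, m) :=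
  \matrix_(i, j) ((beta i j)%:R - (alpha i j)%:R).

Definition one_dim_S (s m : nat) (alpha beta : 'M[nat]_(s, m)) : Prop :=
  \rank (stoich alpha beta) = 1%N.

Definition monom (s : nat) (a : 'I_s -> nat) : {mpoly Real[s]} :=
  \prod_(k < s) 'X_k ^+ a k.

Definition fpoly (s m : nat) (alpha beta : 'M[nat]_(s, m)) (kappa : 'I_m -> Real)
    (i : 'I_s) : {mpoly Real[s]} :=
  \sum_(j < m) (stoich alpha beta i j * kappa j) *: monom (fun k => alpha k j).

Definition fvec (s m : nat) (alpha beta : 'M[nat]_(s, m)) (kappa : 'I_m -> Real)
    (x : 'I_s -> Real) : 'I_s -> Real :=
  fun i => (fpoly alpha beta kappa i).@[x].

Definition jac (s m : nat) (alpha beta : 'M[nat]_(s, m)) (kappa : 'I_m -> Real)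
    (x : 'I_s -> Real) : 'M[Real]_s :=
  \matrix_(i, k) (mderiv k (fpoly alpha beta kappa i)).@[x].

Definition steady_state (s m : nat) (alpha beta : 'M[nat]_(s, m))
    (kappa : 'I_m -> Real) (x : 'I_s -> Real) : Prop :=
  (forall i, 0 <= x i) /\ (forall i, fvec alpha beta kappa x i = 0).

Definition positive_vec (s : nat) (x : 'I_s -> Real) : Prop :=
  forall i, 0 < x i.

(* Nondegenerate: Jac_f(x)(S) = S, i.e. the column space of Jac*N equals
   the column space of N (stated through row spaces of the transposes). *)
Definition nondegenerate (s m : nat) (alpha beta : 'M[nat]_(s, m))
    (kappa : 'I_m -> Real) (x : 'I_s -> Real) : Prop :=
  (((jac alpha beta kappa x *m stoich alpha beta)^T == (stoich alpha beta)^T)%MS).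

Definition stable (s m : nat) (alpha beta : 'M[nat]_(s, m))
    (kappa : 'I_m -> Real) (x : 'I_s -> Real) : Prop :=
  nondegenerate alpha beta kappa x /\
  forall lam : Real[i],
    eigenvalue (map_mx (fun r : Real => real_complex Real r) (jac alpha beta kappa x)) lam ->
    lam != 0 -> complex.Re lam < 0.

(* Stoichiometric compatibility class P_c, with s.+1 species (X_1 = ord0)
   and c in R^s:  (b_{i1}-a_{i1}) x_1 - (b_{11}-a_{11}) x_i = c_{i-1},
   i = 2..s+1, together with x >= 0. *)
Definition compat_class (s m : nat) (alpha beta : 'M[nat]_(s.+1, m.+1))
    (c : 'I_s -> Real) (x : 'I_s.+1 -> Real) : Prop :=
  (forall i, 0 <= x i) /\
  forall i : 'I_s,
    stoich alpha beta (lift ord0 i) ord0 * x ord0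
    - stoich alpha beta ord0 ord0 * x (lift ord0 i) = c i.

From Pilot Require Import Defs.
From HB Require Import structures.
From mathcomp Require Import all_boot all_order all_algebra.
From mathcomp Require Import mpoly complex polyrcf.
From Stdlib Require Import Rdefinitions FunctionalExtensionality.
From mathcomp Require Import Rstruct.
From mathcomp Require Import ring lra zify.

Set Implicit Arguments.
Unset Strict Implicit.
Unset Printing Implicit Defensive.

Import Order.TTheory GRing.Theory Num.Theory.
Local Open Scope ring_scope.

(* Since S is spanned by u = N_{.1} / N_{11}, every f_i equals u_i f_1 and P_c
   is the part of the line x + t u in the nonnegative orthant, so the steady
   states in P_c are the zeros of phi(t) = f_1(x + t u).  The Jacobian
   u (grad f_1)^T has rank one; its only possibly nonzero eigenvalue is
   grad f_1 . u = phi'(t), which nondegeneracy makes nonzero, so a stable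
   steady state is a zero of phi with phi' < 0.  Between two such zeros phi
   must vanish again, which yields a positive steady state strictly between
   them; hence no two neighbouring steady states are stable, and a set of
   pairwise non-neighbouring indices below N has at most ceil(N/2) elements. *)

Lemma mpoly_ring_ind (R : comNzRingType) (n : nat) (P : {mpoly R[n]} -> Prop) :
  (forall c, P c%:MP) -> (forall i, P 'X_i) ->
  (forall p q, P p -> P q -> P (p + q)) -> (forall p q, P p -> P q -> P (p * q)) ->
  forall p, P p.
Proof.
move=> PC PX PD PM p; rewrite [p]mpolyE.
apply: (big_ind P); [by rewrite -mpolyC0 | exact: PD |].
move=> mo _; rewrite -mul_mpolyC; apply: (PM) => //.
rewrite mpolyXE_id; apply: (big_ind P); [by rewrite -mpolyC1 | exact: PM |].
move=> i _; elim: (mo i) => [|k IHk]; first by rewrite expr0 -mpolyC1.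
by rewrite exprS; apply: (PM).
Qed.

Lemma mderivXi (R : comNzRingType) (n : nat) (i k : 'I_n) :
  mderiv k ('X_i : {mpoly R[n]}) = (i == k)%:R%:MP.
Proof.
rewrite mderivX mnm1E; case: eqP => [->|_]; last by rewrite scale0r mpolyC0.
have ->: (U_(k) - U_(k) = 0)%MM by apply/mnmP => j; rewrite mnmBE mnm0E subnn.
by rewrite mpolyX0 scale1r mpolyC1.
Qed.

Section LineRestriction.
Variables (R : comNzRingType) (n : nat) (x u : 'I_n -> R).

Definition line_pt (t : R) (k : 'I_n) : R := x k + u k * t.

Definition line_poly (p : {mpoly R[n]}) : {poly R} :=
  mmap polyC (fun k => (x k)%:P + u k *: 'X) p.

Lemma line_pt0 : line_pt 0 = x.
Proof. by apply: functional_extensionality => k; rewrite /line_pt mulr0 addr0. Qed.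

Lemma horner_line_poly p t : (line_poly p).[t] = p.@[line_pt t].
Proof.
elim/mpoly_ring_ind: p => [c|i|p q IHp IHq|p q IHp IHq].
- by rewrite /line_poly mmapC mevalC hornerC.
- by rewrite /line_poly mmapX mmap1U mevalXU !hornerE.
- by rewrite /line_poly mmapD hornerD IHp IHq mevalD.
- by rewrite /line_poly rmorphM hornerM IHp IHq mevalM.
Qed.

Lemma deriv_line_poly p :
  (line_poly p)^`() = \sum_k u k *: line_poly (mderiv k p).
Proof.
elim/mpoly_ring_ind: p => [c|i|p q IHp IHq|p q IHp IHq].
- rewrite /line_poly mmapC derivC; apply/esym/big1 => k _.
  by rewrite mderivC mmap0 scaler0.
- rewrite /line_poly mmapX mmap1U derivD derivC add0r derivZ derivX.
  rewrite (bigD1 i) //= big1 ?addr0; last first.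
    by move=> k /negbTE ik; rewrite mderivXi eq_sym ik mpolyC0 mmap0 scaler0.
  by rewrite mderivXi eqxx mpolyC1 rmorph1 alg_polyC.
- rewrite /line_poly mmapD derivD IHp IHq -big_split; apply: eq_bigr => k _.
  by rewrite mderivD mmapD scalerDr.
- rewrite /line_poly rmorphM derivM IHp IHq mulr_suml mulr_sumr -big_split.
  apply: eq_bigr => k _.
  by rewrite mderivM rmorphD !rmorphM scalerDr scalerAl scalerAr.
Qed.

Lemma horner_deriv_line_poly p t :
  (line_poly p)^`().[t] = \sum_k (mderiv k p).@[line_pt t] * u k.
Proof.
rewrite deriv_line_poly horner_sum; apply: eq_bigr => k _.
by rewrite hornerZ horner_line_poly mulrC.
Qed.

End LineRestriction.

(* Factoring out both roots, [p = r ('X - a) ('X - b)] and the two slopes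
   force [r] to change sign on [a, b]. *)
Lemma poly_root_between (R : rcfType) (p : {poly R}) (a b : R) : a < b ->
  root p a -> root p b -> p^`().[a] < 0 -> p^`().[b] < 0 ->
  exists2 t, a < t < b & root p t.
Proof.
move=> ab /factor_theorem[q ->] pb dpa dpb.
have /factor_theorem[r Er] : root q b.
  move: pb; rewrite rootM root_XsubC orbC; case: eqP => // ba; move: ab; lra.
move: dpa dpb; rewrite Er !derivM !derivXsubC !hornerE !subrr.
rewrite !(mulr0, mul0r, add0r, addr0, mulr1) => dpa dpb.
have ra : 0 < r.[a] by nra.
have rb : r.[b] < 0 by nra.
have [t] := poly_ivtoo (ltW ab) (ltac:(nra) : r.[a] * r.[b] < 0).
rewrite in_itv /= => abt rt; exists t => //.
by rewrite !rootM rt.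
Qed.

Lemma mxrank1_minor (F : fieldType) (m n : nat) (A : 'M[F]_(m.+1, n.+1)) :
  \rank A = 1%N -> A ord0 ord0 != 0 ->
  forall i j, A i j * A ord0 ord0 = A i ord0 * A ord0 j.
Proof.
move=> rkA A00 i j.
have row0_neq0 : row ord0 A != 0.
  by apply: (contraNneq _ A00) => /matrixP/(_ ord0 ord0)/eqP; rewrite !mxE.
have sA0 : (A <= row ord0 A)%MS.
  by rewrite -(geq_leqif (mxrank_leqif_sup (row_sub ord0 A))) rank_rV row0_neq0 rkA.
have /sub_rVP[a Ea] := submx_trans (row_sub i A) sA0.
have Ai k : A i k = a * A ord0 k.
  by have := congr1 (fun v : 'rV_n.+1 => v ord0 k) Ea; rewrite !mxE.
by rewrite !Ai mulrAC.
Qed.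

Lemma strict_mono_consecutive (d : Order.disp_t) (T : porderType d) (N : nat)
    (f : 'I_N -> T) (k l j : 'I_N) :
  (forall k l : 'I_N, ltn k l -> (f k < f l)%O) -> l = k.+1 :> nat ->
  ~ ((f k < f j)%O /\ (f j < f l)%O).
Proof.
move=> f_mono lk [kj jl].
have [jk|kj'|/val_inj jk] := ltngtP j k.
- by have := lt_asym (f j) (f k); rewrite f_mono //= kj.
- have [jl'|lj|/val_inj jl'] := ltngtP j l.
  + by move: kj' jl'; rewrite lk; lia.
  + by have := lt_asym (f l) (f j); rewrite f_mono //= jl.
  + by move: jl; rewrite jl' ltxx.
- by move: kj; rewrite jk ltxx.
Qed.

Lemma card_sparse_leq_uphalf (N : nat) (A : {set 'I_N}) :
  (forall k l : 'I_N, l = k.+1 :> nat -> k \in A -> l \notin A) ->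
  (#|A| <= uphalf N)%nat.
Proof.
move=> sparse.
rewrite cardE -(size_map (fun k : 'I_N => k./2)) -(size_iota 0 (uphalf N)).
apply: uniq_leq_size.
  rewrite map_inj_in_uniq ?enum_uniq // => k l; rewrite !mem_enum => kA lA hkl.
  apply/ord_inj/eqP; apply: contraT => neq_kl; move: hkl.
  rewrite -!divn2 => hkl.
  have [lk|kl] : l = k.+1 :> nat \/ k = l.+1 :> nat by move: neq_kl hkl; lia.
  - by have := sparse k l lk kA; rewrite lA.
  - by have := sparse l k kl lA; rewrite kA.
move=> _ /mapP[k _ ->]; rewrite mem_iota add0n.
by have := ltn_ord k; rewrite uphalfE -!divn2; lia.
Qed.

Section OneDimensionalNetwork.
Variables (s m : nat) (alpha beta : 'M[nat]_(s.+1, m.+1)).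
Local Notation N := (stoich alpha beta).
Hypothesis N00_neq0 : N ord0 ord0 != 0.

Definition stoich_dir (i : 'I_s.+1) : Real := N i ord0 / N ord0 ord0.

Lemma stoich_dir0 : stoich_dir ord0 = 1.
Proof. exact: divff. Qed.

Lemma stoich_dirK i t : N ord0 ord0 * (stoich_dir i * t) = N i ord0 * t.
Proof. by rewrite /stoich_dir mulrCA mulrA divfK. Qed.

Lemma compat_class_line c x y :
  compat_class alpha beta c x -> compat_class alpha beta c y ->
  y = line_pt x stoich_dir (y ord0 - x ord0).
Proof.
move=> [_ xc] [_ yc]; apply: functional_extensionality => i; rewrite /line_pt.
case: (unliftP ord0 i) => [j ->|->]; last by rewrite stoich_dir0 mul1r addrC subrK.
apply: (mulfI N00_neq0); rewrite mulrDr stoich_dirK mulrBr.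
by have := xc j; have := yc j; lra.
Qed.

Lemma compat_class_line_pt c x t : compat_class alpha beta c x ->
  (forall i, 0 <= line_pt x stoich_dir t i) ->
  compat_class alpha beta c (line_pt x stoich_dir t).
Proof.
move=> [_ xc] z_ge0; split=> // i; rewrite -xc /line_pt stoich_dir0 mul1r.
by rewrite !mulrDr stoich_dirK; ring.
Qed.

Hypothesis rankN1 : one_dim_S alpha beta.

Lemma stoich_dirM i j : N i j = stoich_dir i * N ord0 j.
Proof. by apply: (mulIf N00_neq0); rewrite mxrank1_minor // /stoich_dir mulrAC divfK. Qed.

Variable kappa : 'I_m.+1 -> Real.
Local Notation f1 := (fpoly alpha beta kappa ord0).
Local Open Scope complex_scope.
Local Notation jacC x :=
  (map_mx (fun r : Real => real_complex Real r) (jac alpha beta kappa x)).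

Lemma fpoly_dir i : fpoly alpha beta kappa i = stoich_dir i *: f1.
Proof.
rewrite /fpoly scaler_sumr; apply: eq_bigr => j _.
by rewrite scalerA stoich_dirM mulrA.
Qed.

Lemma steady_stateE x :
  steady_state alpha beta kappa x <-> (forall i, 0 <= x i) /\ f1.@[x] = 0.
Proof.
rewrite /steady_state /fvec; split=> -[x_ge0 fx0]; split=> // i.
by rewrite fpoly_dir mevalZ fx0 mulr0.
Qed.

(* The trace, hence the only possibly nonzero eigenvalue, of the rank-one
   Jacobian [stoich_dir (grad f1)^T]. *)
Definition dir_deriv (x : 'I_s.+1 -> Real) : Real :=
  \sum_k (mderiv k f1).@[x] * stoich_dir k.

Lemma jac_dir x i k : jac alpha beta kappa x i k = stoich_dir i * (mderiv k f1).@[x].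
Proof. by rewrite mxE fpoly_dir mderivZ mevalZ. Qed.

Lemma jac_mul_stoich x : jac alpha beta kappa x *m N = dir_deriv x *: N.
Proof.
apply/matrixP => i j; rewrite mxE [RHS]mxE stoich_dirM /dir_deriv.
rewrite mulr_suml; apply: eq_bigr => k _.
by rewrite jac_dir (stoich_dirM k j); ring.
Qed.

Lemma nondegenerate_dir_deriv_neq0 x :
  Defs.nondegenerate alpha beta kappa x -> dir_deriv x != 0.
Proof.
rewrite /Defs.nondegenerate jac_mul_stoich => /andP[_ sNJ]; apply/eqP => a0.
move: sNJ; rewrite a0 scale0r trmx0 => /mxrankS; rewrite mxrank0 mxrank_tr.
by move: rankN1; rewrite /one_dim_S => ->.
Qed.

Lemma eigenvalue_dir_deriv x :
  dir_deriv x != 0 -> eigenvalue (jacC x) (dir_deriv x)%:C.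
Proof.
move=> a_neq0; apply/eigenvalueP.
exists (\row_k ((mderiv k f1).@[x])%:C); last first.
  apply: (contraNneq _ a_neq0) => /rowP w0; apply/eqP.
  rewrite /dir_deriv big1 // => k _.
  by have := w0 k; rewrite !mxE => /complexI ->; rewrite mul0r.
have jacCE i k : jacC x i k = (stoich_dir i * (mderiv k f1).@[x])%:C.
  by rewrite mxE jac_dir.
apply/rowP => j; rewrite mxE.
under eq_bigr do rewrite jacCE mxE -rmorphM.
rewrite -rmorph_sum !mxE -rmorphM; congr _%:C.
by rewrite /dir_deriv mulr_suml; apply: eq_bigr => k _; ring.
Qed.

Lemma stable_dir_deriv_lt0 x : stable alpha beta kappa x -> dir_deriv x < 0.
Proof.
case=> /nondegenerate_dir_deriv_neq0 a_neq0 eig.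
apply: (eig _ (eigenvalue_dir_deriv a_neq0)).
by apply: contra a_neq0 => /eqP/complexI ->.
Qed.

Lemma stable_steady_states_separated c x y :
    positive_vec x -> steady_state alpha beta kappa x ->
    compat_class alpha beta c x -> stable alpha beta kappa x ->
    positive_vec y -> steady_state alpha beta kappa y ->
    compat_class alpha beta c y -> stable alpha beta kappa y ->
    x ord0 < y ord0 ->
  exists2 z, [/\ positive_vec z, steady_state alpha beta kappa z
               & compat_class alpha beta c z]
           & x ord0 < z ord0 < y ord0.
Proof.
move=> x_gt0 xss xc xst y_gt0 yss yc yst xy.
have yE := compat_class_line xc yc; set T := y ord0 - x ord0 in yE.
set phi := line_poly x stoich_dir f1.
have phi_root t : root phi t = (f1.@[line_pt x stoich_dir t] == 0).
  by rewrite rootE horner_line_poly.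
have dphi t : phi^`().[t] = dir_deriv (line_pt x stoich_dir t).
  exact: horner_deriv_line_poly.
have [t /andP[t_gt0 t_ltT]] : exists2 t, 0 < t < T & root phi t.
  apply: poly_root_between.
  - by rewrite subr_gt0.
  - by rewrite phi_root line_pt0; case/steady_stateE: xss => _ ->.
  - by rewrite phi_root -yE; case/steady_stateE: yss => _ ->.
  - by rewrite dphi line_pt0 stable_dir_deriv_lt0.
  - by rewrite dphi -yE stable_dir_deriv_lt0.
rewrite phi_root => /eqP phit.
have z_gt0 : positive_vec (line_pt x stoich_dir t).
  move=> i; have := x_gt0 i; have := y_gt0 i; rewrite yE /line_pt => yi xi.
  by have [ui|ui] := lerP 0 (stoich_dir i); nra.
exists (line_pt x stoich_dir t).
  split=> //; last by apply: compat_class_line_pt => // i; apply: ltW.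
  by apply/steady_stateE; split=> // i; apply: ltW.
by rewrite /line_pt stoich_dir0 mul1r; apply/andP; split; rewrite /T in t_ltT; lra.
Qed.

End OneDimensionalNetwork.

Theorem corollary5p6 (s m : nat) (alpha beta : 'M[nat]_(s.+1, m.+1))
  (Hvalid : valid_network alpha beta)
  (Hdim : one_dim_S alpha beta)
  (Hlab : stoich alpha beta ord0 ord0 != 0)
  (kappa : 'I_m.+1 -> Real) (Hkappa : forall j, 0 < kappa j)
  (c : 'I_s -> Real)
  (N : nat) (xs : 'I_N -> 'I_s.+1 -> Real)
  (Hss : forall k, positive_vec (xs k) /\ steady_state alpha beta kappa (xs k)
                   /\ compat_class alpha beta c (xs k))
  (Hall : forall x, positive_vec x -> steady_state alpha beta kappa x ->
                    compat_class alpha beta c x -> exists k, x = xs k)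
  (Hord : forall k l : 'I_N, ltn k l -> xs k ord0 < xs l ord0) :
  (forall k l : 'I_N, nat_of_ord l = (nat_of_ord k).+1 ->
     ~ (stable alpha beta kappa (xs k) /\ stable alpha beta kappa (xs l)))
  /\
  (forall A : {set 'I_N}, (forall k, k \in A -> stable alpha beta kappa (xs k)) ->
     leq #|A| (uphalf N)).
Proof.
have adjacent_not_stable (k l : 'I_N) : l = k.+1 :> nat ->
    ~ (stable alpha beta kappa (xs k) /\ stable alpha beta kappa (xs l)).
  move=> lk [kst lst].
  have [[x_gt0 [xss xc]] [y_gt0 [yss yc]]] := (Hss k, Hss l).
  have kl : ltn k l by rewrite /ltn /= lk.
  have [z [z_gt0 zss zc] /andP zbetween] := stable_steady_states_separated
    Hlab Hdim x_gt0 xss xc kst y_gt0 yss yc lst (Hord k l kl).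
  have [j zj] := Hall z z_gt0 zss zc.
  by apply: (strict_mono_consecutive (j := j) Hord lk); rewrite -zj.
split=> // A A_stable; apply: card_sparse_leq_uphalf => k l lk kA.
by apply/negP => lA; apply: (adjacent_not_stable k l lk); split; apply: A_stable.
Qed.
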